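(* Let $s\in(0,2]$, $P$ a finite set of $n$ points in $(\mathbb{R}^d,\ell_s)$ and $\varepsilon>0$. For any query point $q$, the exact nearest neighbor query procedure described in the context returns a point of $\mathrm{NN}_P(q)$ with high probability.
   Context: $\mathrm{d}$ is the $\ell_s$ distance; $\mathrm{d}(x,P)=\min\{\mathrm{d}(x,p):p\in P\setminus\{x\}\}$; $\mathrm{NN}_P(x)$ is the set of $p\in P\setminus\{x\}$ with $\mathrm{d}(x,p)=\mathrm{d}(x,P)$; $N_P(x,R)$ is the set of $p\in P\setminus\{x\}$ with $\mathrm{d}(x,p)\le R$. Ingredients. (1) An $\varepsilon$-approximate nearest neighbor structure $\mathcal{T}(P,\varepsilon)$ (Har-Peled's tree of locality-sensitive hashing $(r,\varepsilon)$-PLEB structures) which fixes at preprocessing a finite set of candidate radii and, given $q$, outputs one of these radii $r$ satisfying $\mathrm{d}(q,P)\le r\le(1+\varepsilon)\mathrm{d}(q,P)$ with probability at least $1-1/n$. (2) For each candidate radius $r$, a structure $\mathcal{A}'(P,r,\varepsilon)$ which, given $q$, returns a set equal to $N_P(q,r)$ with high probability (it is the lifted locality-sensitive hashing structure for exhaustive $r$-PLEB: lift $P$ to $\mathbb{R}^{d+1}$ with last coordinate $0$, lift $q$ with last coordinate $r/((1+\varepsilon)^s-1)^{1/s}$, and report all lifted data points within distance $r(1+\frac{1}{(1+\varepsilon)^s-1})^{1/s}$ of the lifted query among those colliding with it in hash tables built from $s$-stable hash functions). Query procedure: (1) answer an $\varepsilon$-NN query with $\mathcal{T}(P,\varepsilon)$,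 obtaining $r$; (2) answer the exhaustive $r$-PLEB query with $\mathcal{A}'(P,r,\varepsilon)$, obtaining a set $S$; (3) return the point of $S$ closest to $q$, or an arbitrary point of $P$ if $S=\emptyset$. *)

From HB Require Import structures.
From mathcomp Require Import all_boot all_order all_algebra.
From mathcomp Require Import all_classical all_reals all_analysis.
Set Implicit Arguments. Unset Strict Implicit. Unset Printing Implicit Defensive.
Import Order.TTheory GRing.Theory Num.Theory.
Local Open Scope classical_set_scope.
Local Open Scope ring_scope.

Section Defs.
Variables (R : realType) (dim : nat).
Notation point := 'rV[R]_dim.

Definition ls_dist (s : R) (x y : point) : R :=
  (\sum_(i < dim) `|x ord0 i - y ord0 i| `^ s) `^ s^-1.

Definition dists (s : R) (P : seq point) (q : point) : seq R :=
  [seq ls_dist s q p | p <- P & p != q].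

Definition dist_to (s : R) (P : seq point) (q : point) : R :=
  \big[Num.min/head 0 (dists s P q)]_(x <- dists s P q) x.

Definition NNset (s : R) (P : seq point) (q : point) : set point :=
  [set p | p \in P /\ p != q /\ ls_dist s q p = dist_to s P q].

Definition Nball (s : R) (P : seq point) (q : point) (r : R) : set point :=
  [set p | p \in P /\ p != q /\ ls_dist s q p <= r].

(* x is a possible answer of step (3) given the set S returned by step (2):
   a point of S closest to q, or an arbitrary point of P if S is empty. *)
Definition step3_output (s : R) (P : seq point) (q : point) (S : set point)
  (x : point) : Prop :=
  (S = set0 /\ x \in P) \/ (S x /\ forall y, S y -> ls_dist s q x <= ls_dist s q y).

End Defs.

From HB Require Import structures.
From mathcomp Require Import all_boot all_order all_algebra.
From mathcomp Require Import all_classical all_reals all_analysis.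
From mathcomp Require Import lra.
Import Order.TTheory GRing.Theory Num.Theory.
Local Open Scope classical_set_scope.
Local Open Scope ring_scope.

(* Whenever the radius r returned by the approximate structure satisfies
   d(q,P) <= r, the exact ball query returns N_P(q,r), which contains a nearest
   neighbour, so the closest point of it is a nearest neighbour.  Both
   structures succeed together on the event "rT = r and A'(r) succeeds";
   conditioning on the value r of rT and using independence, this event has
   probability at least (1 - delta) P(d(q,P) <= rT) >= (1 - delta)(1 - 1/n). *)

Section nearest_neighbour.
Variables (R : realType) (dim : nat) (s : R) (P : seq 'rV[R]_dim)
  (q : 'rV[R]_dim).

Lemma dist_to_le p : p \in P -> p != q -> dist_to s P q <= ls_dist s q p.
Proof.
move=> pP pq; apply: ge_bigmin_seq => //.
by apply/mapP; exists p; rewrite // mem_filter pq.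
Qed.

Lemma NNset_neq0 : (exists2 p, p \in P & p != q) -> NNset s P q !=set0.
Proof.
case=> p0 p0P p0q.
have : dist_to s P q \in dists s P q.
  have d0 : ls_dist s q p0 \in dists s P q.
    by apply/mapP; exists p0; rewrite // mem_filter p0q.
  rewrite /dist_to big_seq; apply: (big_ind (fun x => x \in dists s P q)) => //.
  - by case: (dists s P q) d0 => //= a l _; rewrite mem_head.
  - by move=> x y xD yD; case: leP.
by move=> /mapP[p]; rewrite mem_filter => /andP[pq pP] dp; exists p.
Qed.

Lemma step3_output_Nball_NNset r x :
  (exists2 p, p \in P & p != q) -> dist_to s P q <= r ->
  step3_output s P q (Nball s P q r) x -> NNset s P q x.
Proof.
move=> /NNset_neq0[p [pP [pq dp]]] dr.
have Bp : Nball s P q r p by split=> //; split=> //; rewrite dp.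
case=> [[B0 _]|[[xP [xq _]] xmin]]; first by move: Bp; rewrite B0.
split=> [//|]; split=> [//|]; apply/eqP.
by rewrite eq_le dist_to_le // -dp xmin.
Qed.

End nearest_neighbour.

Section fibers.
Context {d} {T : measurableType d} {R : realType} {I : choiceType}.
Context {f : T -> I} {l : seq I}.

Lemma preimage_measurable_finite_range :
  (forall t, f t \in l) ->
  (forall i, i \in l -> measurable [set t | f t = i]) ->
  forall S : set I, measurable (f @^-1` S).
Proof.
move=> f_range mf S.
have -> : f @^-1` S = \bigcup_(i in [set` l] `&` S) [set t | f t = i].
  apply/seteqP; split=> [t St|t [i [_ Si] /= ->] //].
  by exists (f t); first split; [exact: f_range | exact: St |].
apply: fin_bigcup_measurable => [|i [li _]]; last exact: mf.
exact/finite_setIl/finite_seq.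
Qed.

Lemma measure_bigcup_fibers (mu : {measure set T -> \bar R}) (A : I -> set T) :
  uniq l -> (forall i, i \in l -> measurable (A i)) ->
  (forall i, A i `<=` [set t | f t = i]) ->
  mu (\bigcup_(i in [set` l]) A i) = (\sum_(i <- l) mu (A i))%E.
Proof.
move=> ul mA Af; rewrite measure_fin_bigcup.
- exact/esym/fsbig_seq.
- exact: finite_seq.
- by move=> i j _ _ [t [/Af <- /Af <-]].
- exact: mA.
Qed.

(* Total probability, conditioning on the value of f. *)
Lemma measure_fibersI_ge (mu : {measure set T -> \bar R}) (B : I -> set T)
  (p : R) :
  uniq l -> {in l, forall i, measurable [set t | f t = i]} ->
  {in l, forall i, measurable (B i)} ->
  {in l, forall i,
    mu ([set t | f t = i] `&` B i) = (mu [set t | f t = i] * mu (B i))%E} ->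
  {in l, forall i, p%:E <= mu (B i)}%E ->
  (mu (f @^-1` [set` l]) * p%:E <=
     mu (\bigcup_(i in [set` l]) ([set t | f t = i] `&` B i)))%E.
Proof.
move=> ul mf mB indep pB.
have -> : f @^-1` [set` l] = \bigcup_(i in [set` l]) [set t | f t = i].
  by apply/seteqP; split=> [t lt|t [i li /= ->]]; first by exists (f t).
have mfB i : i \in l -> measurable ([set t | f t = i] `&` B i).
  by move=> li; apply: measurableI; [exact: mf | exact: mB].
rewrite (measure_bigcup_fibers _ _ ul mf (fun=> @subset_refl _ _)).
rewrite (measure_bigcup_fibers _ _ ul mfB (fun=> @subIsetl _ _ _)).
rewrite ge0_sume_distrl // big_seq [leRHS]big_seq.
by apply: lee_sum => i li; rewrite indep // lee_wpmul2l // pB.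
Qed.

End fibers.

Lemma probability_setT_neq0 {d} {T : measurableType d} {R : realType}
  (mu : probability T R) : [set: T] !=set0.
Proof.
apply/set0P/eqP => T0; have := probability_setT mu.
by rewrite T0 measure0 => /eqP; rewrite eqe eq_sym oner_eq0.
Qed.

Lemma ge0_of_probability_ge1B {d} {T : measurableType d} {R : realType}
  (mu : probability T R) {A : set T} {b : R} :
  measurable A -> ((1 - b)%:E <= mu A)%E -> 0 <= b.
Proof.
move=> mA /le_trans/(_ (probability_le1 mu mA)); rewrite lee_fin; lra.
Qed.

Lemma lee_sub_mul1B (R : realType) (x : \bar R) (a b : R) :
  0 <= b -> (a%:E <= x)%E -> (x <= 1)%E -> ((a - b)%:E <= x * (1 - b)%:E)%E.
Proof.
case: x => [x||] b0 //; rewrite -EFinM !lee_fin => ax x1; nra.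
Qed.

Theorem lemma4 (R : realType) (dim : nat) (s eps : R) (P : seq 'rV[R]_dim)
  (q : 'rV[R]_dim)
  (d0 : measure_display) (Omega : measurableType d0) (Pr : probability Omega R)
  (radii : seq R) (rT : Omega -> R) (SA : R -> Omega -> set 'rV[R]_dim)
  (delta : R) :
  0 < s <= 2 -> 0 < eps -> uniq P ->
  (exists2 p, p \in P & p != q) ->
  (forall w, rT w \in radii) ->
  (forall r0, r0 \in radii -> measurable [set w | rT w = r0]) ->
  ((1 - (size P)%:R^-1)%:E <=
     Pr [set w | (dist_to s P q <= rT w <= (1 + eps) * dist_to s P q)%R])%E ->
  (forall r0, r0 \in radii ->
     measurable [set w | SA r0 w = Nball s P q r0] /\
     ((1 - delta)%:E <= Pr [set w | SA r0 w = Nball s P q r0])%E) ->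
  (forall r0, r0 \in radii ->
     Pr ([set w | rT w = r0] `&` [set w | SA r0 w = Nball s P q r0]) =
     (Pr [set w | rT w = r0] * Pr [set w | SA r0 w = Nball s P q r0])%E) ->
  exists2 E : set Omega, measurable E /\
    E `<=` [set w | forall x, step3_output s P q (SA (rT w) w) x -> NNset s P q x]
    & ((1 - (size P)%:R^-1 - delta)%:E <= Pr E)%E.
Proof.
move=> _ _ _ Pq rT_radii mT T_approx A_exact indep.
set dq := dist_to s P q in T_approx *.
pose good r := [set w | SA r w = Nball s P q r].
have mgood : {in radii, forall r, measurable (good r)} by move=> r /A_exact[].
have pgood : {in radii, forall r, (1 - delta)%:E <= Pr (good r)}%E.
  by move=> r /A_exact[].
pose rs := undup [seq r <- radii | dq <= r].
have rsE r : (r \in rs) = (r \in radii) && (dq <= r).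
  by rewrite mem_undup mem_filter andbC.
have rs_radii : {subset rs <= radii} by move=> r; rewrite rsE => /andP[].
exists (\bigcup_(r in [set` rs]) ([set w | rT w = r] `&` good r)).
  split=> [|w [r]]; last first.
    rewrite /= rsE => /andP[_ dr] [/= -> ->] x.
    exact: step3_output_Nball_NNset.
  apply: fin_bigcup_measurable => [|r /rs_radii rr]; first exact: finite_seq.
  by apply: measurableI; [exact: mT | exact: mgood].
have [w0 _] := probability_setT_neq0 Pr.
have delta_ge0 :=
  ge0_of_probability_ge1B Pr (mgood _ (rT_radii w0)) (pgood _ (rT_radii w0)).
have mpre := preimage_measurable_finite_range rT_radii mT.
apply: le_trans (measure_fibersI_ge Pr good (1 - delta) (undup_uniq _)
  (sub_in1 rs_radii mT) (sub_in1 rs_radii mgood) (sub_in1 rs_radii indep)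
  (sub_in1 rs_radii pgood)).
apply: lee_sub_mul1B => //; last exact: probability_le1.
apply: le_trans T_approx _; apply: le_measure.
- by rewrite inE; exact: (mpre [set r | dq <= r <= (1 + eps) * dq]).
- by rewrite inE; exact: mpre.
- by move=> w /andP[dw _]; rewrite /= rsE rT_radii.
Qed.
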